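(* Let $X$ be a set and $\{d_r\colon X\times X\to\mathbb{R}_{\ge0}\cup\{\infty\}\}_{r>0}$ a family satisfying the weaker $\{d_r\}$-axioms (see context). If $p\colon U_p\to X$ is a plot of the diffeology induced by $\{d_r\}_{r>0}$ (see context), then $p$ is continuous, where $X$ carries the topology in which $W\subset X$ is open iff for every $x\in W$ there are $r,\varepsilon>0$ with $\{y\in X\mid d_r(x,y)<\varepsilon\}\subset W$.
   Context: The weaker $\{d_r\}$-axioms, required for all $x,y,z\in X$: (Self-distance) $d_r(x,x)=0$ for all $r>0$. (Upper semi-continuity) if $r_1\le r_2$ then $d_{r_1}(x,y)\le d_{r_2}(x,y)$; and if $d_r(x,y)<\varepsilon$ there is $\delta>0$ with $d_{r+\delta}(x,y)<\varepsilon$. (Weaker triangle inequality) for $r_1,r_2,r_3>0$, if $d_{r_1+r_2+r_3}(x,y)<r_3$ and $d_{r_1+r_2+r_3}(y,z)<r_2$, then $d_{r_1}(x,z)\le d_{r_1+r_2+r_3}(x,y)+d_{r_1+r_2+r_3}(y,z)$. Plots of the induced diffeology: a map $p\colon U_p\to X$ with $U_p$ open in some $\mathbb{R}^n$ such that for each $t_0\in U_p$ there is $\delta>0$ with (1) $t\mapsto d_r(p(t_0),p(t))$ real-valued and continuous on the open ball $B_\delta(t_0)$ for every $r>0$, and (2) for each $t_1\in B_\delta(t_0)\setminus p^{-1}(p(t_0))$ and each $r>0$, $t\mapsto d_r(p(t_1),p(t))$ is smooth at $t_0$. *)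

From HB Require Import structures.
From mathcomp Require Import all_boot all_order all_algebra.
From mathcomp Require Import all_classical all_reals all_analysis.
Set Implicit Arguments. Unset Strict Implicit. Unset Printing Implicit Defensive.
Import Order.TTheory GRing.Theory Num.Theory.
Import numFieldNormedType.Exports.
Local Open Scope classical_set_scope.
Local Open Scope ring_scope.

(* d r x y : the family {d_r}_{r>0}, valued in [0, +oo] (only r > 0 matters) *)
Definition weaker_dr_axioms (R : realType) (X : Type) (d : R -> X -> X -> \bar R) : Prop :=
  (forall r x y, 0 < r -> (0 <= d r x y)%E) /\
  (forall r x, 0 < r -> d r x x = 0%E) /\
  (* upper semi-continuity: monotonicity *)
  (forall r1 r2 x y, 0 < r1 -> r1 <= r2 -> (d r1 x y <= d r2 x y)%E) /\
  (* upper semi-continuity: right continuity from above *)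
  (forall r x y (eps : R), 0 < r -> (d r x y < eps%:E)%E ->
     exists delta : R, 0 < delta /\ (d (r + delta)%R x y < eps%:E)%E) /\
  (forall r1 r2 r3 x y z, 0 < r1 -> 0 < r2 -> 0 < r3 ->
     (d (r1 + r2 + r3)%R x y < r3%:E)%E -> (d (r1 + r2 + r3)%R y z < r2%:E)%E ->
     (d r1 x z <= d (r1 + r2 + r3)%R x y + d (r1 + r2 + r3)%R y z)%E).

Definition dr_open (R : realType) (X : Type) (d : R -> X -> X -> \bar R) (W : set X) : Prop :=
  forall x, W x -> exists r eps : R, 0 < r /\ 0 < eps /\
    [set y | (d r x y < eps%:E)%E] `<=` W.

Definition eball (R : realType) (n : nat) (t0 : 'rV[R]_n) (delta : R) : set 'rV[R]_n :=
  [set t | \sum_(i < n) (t ord0 i - t0 ord0 i) ^+ 2 < delta ^+ 2].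

Fixpoint iter_partial (R : realType) (n : nat) (vs : seq 'I_n) (f : 'rV[R]_n -> R)
  : 'rV[R]_n -> R :=
  match vs with
  | [::] => f
  | i :: vs' => fun x => 'D_(delta_mx 0 i) (iter_partial vs' f) x
  end.

Definition smooth_on (R : realType) (n : nat) (V : set 'rV[R]_n) (f : 'rV[R]_n -> R) : Prop :=
  (forall (vs : seq 'I_n) (i : 'I_n) x, V x ->
      derivable (iter_partial vs f) x (delta_mx 0 i)) /\
  (forall vs : seq 'I_n, {within V, continuous (iter_partial vs f)}).

Definition smooth_at (R : realType) (n : nat) (g : 'rV[R]_n -> \bar R) (t0 : 'rV[R]_n) : Prop :=
  exists (V : set 'rV[R]_n) (f : 'rV[R]_n -> R),
    open V /\ V t0 /\ (forall t, V t -> g t = (f t)%:E) /\ smooth_on V f.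

Definition is_dr_plot (R : realType) (X : Type) (d : R -> X -> X -> \bar R)
  (n : nat) (U : set 'rV[R]_n) (p : 'rV[R]_n -> X) : Prop :=
  open U /\
  forall t0, U t0 -> exists delta : R, 0 < delta /\ eball t0 delta `<=` U /\
    (forall r : R, 0 < r -> exists f : 'rV[R]_n -> R,
        (forall t, eball t0 delta t -> d r (p t0) (p t) = (f t)%:E) /\
        {within eball t0 delta, continuous f}) /\
    (forall t1, eball t0 delta t1 -> p t1 <> p t0 ->
       forall r : R, 0 < r -> smooth_at (fun t => d r (p t1) (p t)) t0).

From HB Require Import structures.
From mathcomp Require Import all_boot all_order all_algebra.
From mathcomp Require Import all_classical all_reals all_analysis.
Import Order.TTheory GRing.Theory Num.Theory.
Import numFieldNormedType.Exports.
Local Open Scope classical_set_scope.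
Local Open Scope ring_scope.

(* Given [t0] with [p t0] in a
   d-open set [W], pick [r, eps] with [{y | d_r (p t0, y) < eps} ⊆ W].  The
   plot condition makes [t ↦ d_r (p t0, p t)] continuous at [t0], where it
   takes the value [d_r (p t0, p t0) = 0], so it stays below [eps] near [t0]. *)

Lemma eball_nbhs {R : realType} {n : nat} (t0 : 'rV[R]_n) (delta : R) :
  0 < delta -> nbhs t0 (eball t0 delta).
Proof.
move=> delta_gt0.
pose sqdist (t : 'rV[R]_n) : R := \sum_(i < n) (t ord0 i - t0 ord0 i) ^+ 2.
have coordB_cont i : continuous (fun t : 'rV[R]_n => t ord0 i - t0 ord0 i).
  move=> t; exact: (@cvgB _ R^o _ _ _ _ _ _ _
                        (@coord_continuous R 1 n ord0 i t) (cvg_cst _)).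
have sqdist_cont : continuous sqdist.
  apply: (@continuous_big R^o); first exact: add_continuous.
  by move=> i _ t; exact: (continuousM (coordB_cont i t) (coordB_cont i t)).
have sqdist_t0 : sqdist t0 = 0.
  by rewrite /sqdist big1 // => i _; rewrite subrr expr0n.
have : sqdist t0 < delta ^+ 2 by rewrite sqdist_t0 exprn_gt0.
exact: cvgr_lt _ (sqdist_cont t0) _.
Qed.

Lemma continuous_within_nbhs {T Y : topologicalType} {V : set T} {f : T -> Y} {x : T} :
  nbhs x V -> {within V, continuous f} -> f @ x --> f x.
Proof.
move=> Vx f_cont.
have := (subspace_continuousP _ _).1 f_cont x (nbhs_singleton Vx).
by rewrite within_interior.
Qed.

Lemma dr_plot_near_dist_lt {R : realType} {X : Type} {d : R -> X -> X -> \bar R}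
    {n : nat} {U : set 'rV[R]_n} {p : 'rV[R]_n -> X} {t0 : 'rV[R]_n} {r eps : R} :
  (forall r x, 0 < r -> d r x x = 0%E) -> is_dr_plot d U p -> U t0 ->
  0 < r -> 0 < eps ->
  \forall t \near t0, U t /\ (d r (p t0) (p t) < eps%:E)%E.
Proof.
move=> d_self [_ plot] Ut0 r_gt0 eps_gt0.
have [delta [delta_gt0 [ballU [dist_cont _]]]] := plot t0 Ut0.
have [f [f_dist f_cont]] := dist_cont r r_gt0.
have ball_t0 := eball_nbhs t0 delta delta_gt0.
have f_t0 : f t0 = 0.
  by have := f_dist t0 (nbhs_singleton ball_t0); rewrite d_self // => -[].
have : f t0 < eps by rewrite f_t0.
move/(cvgr_lt _ (continuous_within_nbhs ball_t0 f_cont)) => f_lt.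
near=> t.
have ball_t : eball t0 delta t by near: t.
split; first exact: ballU.
rewrite f_dist // lte_fin; near: t; exact: f_lt.
Unshelve. all: by end_near.
Qed.

Theorem lemmaA1 (R : realType) (X : Type) (d : R -> X -> X -> \bar R)
  (n : nat) (U : set 'rV[R]_n) (p : 'rV[R]_n -> X) :
  weaker_dr_axioms d -> is_dr_plot d U p ->
  forall W : set X, dr_open d W -> open (U `&` p @^-1` W).
Proof.
move=> [_ [d_self _]] plot W W_open.
rewrite openE => t0 [Ut0 W_pt0].
have [r [eps [r_gt0 [eps_gt0 ballW]]]] := W_open _ W_pt0.
apply: filterS (dr_plot_near_dist_lt d_self plot Ut0 r_gt0 eps_gt0).
by move=> t [Ut dist_lt]; split; last exact: ballW.
Qed.
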